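(* For $n\ge 1$ let $p_{n,j}$ be the number of independent sets of size $j$ in the path $P_n$ on $n$ vertices, and let $T_n=\sum_{j=1}^{\lceil n/2\rceil}(-1)^{j-1}j\,p_{n,j}$. Then for every integer $k\ge 0$, $$T_{3k+1}=T_{3k+3}=(-1)^k(k+1),\qquad T_{3k+2}=(-1)^k\,2(k+1).$$
   Context: An independent set of a graph is a set of vertices no two of which are adjacent. *)

From mathcomp Require Import all_boot all_order all_algebra.
Set Implicit Arguments. Unset Strict Implicit. Unset Printing Implicit Defensive.
Import GRing.Theory Num.Theory.

Definition path_adj (n : nat) : rel 'I_n :=
  fun i j => (i.+1 == j :> nat) || (j.+1 == i :> nat).

Definition independent (n : nat) (S : {set 'I_n}) : bool :=
  [forall x in S, forall y in S, ~~ path_adj x y].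

Definition pnj (n j : nat) : nat :=
  #|[set S : {set 'I_n} | independent S & #|S| == j]|.

Definition T (n : nat) : int :=
  (\sum_(1 <= j < (uphalf n).+1) (-1) ^+ (j.-1) * (j%:Z) * ((pnj n j)%:Z))%R.

(* Removing the first vertex of P_(n+2), together with its neighbour when it is
   in the set, gives for every weight w on set sizes the recurrence
   I_(n+2)(w) = I_(n+1)(w) + I_n(w(. + 1)) for I_n(w), the sum of w(|S|) over
   the independent sets S of P_n.  T_n is I_n for the weight (-1)^(j-1) j,
   whose shift is (-1)^j minus itself; hence T_(n+2) = T_(n+1) - T_n + A_n,
   where A_n, the alternating count of independent sets, satisfies
   A_(n+2) = A_(n+1) - A_n and is 6-periodic. *)
From mathcomp Require Import all_boot all_order all_algebra ring zify.
Import GRing.Theory Num.Theory.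
Set Implicit Arguments. Unset Strict Implicit.

Lemma path_adjC n (i j : 'I_n) : path_adj i j = path_adj j i.
Proof. by rewrite /path_adj orbC. Qed.

Lemma path_adj_lift n (i j : 'I_n) :
  path_adj (lift ord0 i) (lift ord0 j) = path_adj i j.
Proof. by rewrite /path_adj /= /bump !add1n. Qed.

Lemma path_adj0_lift n (j : 'I_n) : path_adj ord0 (lift ord0 j) = (val j == 0).
Proof. by rewrite /path_adj /= /bump !add1n orbF eq_sym. Qed.

Lemma path_adj00 n : path_adj (ord0 : 'I_n.+1) ord0 = false.
Proof. by []. Qed.

Lemma independentP n (S : {set 'I_n}) :
  reflect {in S &, forall x y, ~~ path_adj x y} (independent S).
Proof.
apply: (iffP forall_inP) => [indS x y xS yS | indS x xS].
  exact: forall_inP (indS x xS) y yS.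
by apply/forall_inP => y yS; apply: indS.
Qed.

(* [i |-> i./2] is injective on an independent set: vertices with the same half
   are equal or adjacent. *)
Lemma card_independent n (S : {set 'I_n}) : independent S -> #|S| <= uphalf n.
Proof.
move=> /independentP indS.
have half_lt (i : 'I_n) : i./2 < uphalf n by exact: (@half_leq i.+2 n.+1 (ltn_ord i)).
pose half_ord i := Ordinal (half_lt i).
rewrite -(@card_in_imset _ _ half_ord).
  by apply: leq_trans (max_card _) _; rewrite card_ord.
move=> i j iS jS /(congr1 val) /= eq_half; apply/ord_inj/eqP.
apply: contraT => neq_ij; have := indS i j iS jS; rewrite /path_adj.
move: eq_half neq_ij; rewrite -!divn2; lia.
Qed.

Definition cons_set n (b : bool) (X : {set 'I_n}) : {set 'I_n.+1} :=
  [set x | if unlift ord0 x is Some i then i \in X else b].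

Lemma mem_cons_set0 n b (X : {set 'I_n}) : (ord0 \in cons_set b X) = b.
Proof. by rewrite inE unlift_none. Qed.

Lemma mem_cons_set_lift n b (X : {set 'I_n}) i :
  (lift ord0 i \in cons_set b X) = (i \in X).
Proof. by rewrite inE liftK. Qed.

Lemma card_cons_set n b (X : {set 'I_n}) : #|cons_set b X| = b + #|X|.
Proof.
rewrite -!sum1_card big_mkcond [in RHS]big_mkcond /= big_ord_recl mem_cons_set0.
by congr (_ + _); apply: eq_bigr => i _; rewrite mem_cons_set_lift.
Qed.

Lemma big_cons_set (V : nmodType) n (F : {set 'I_n.+1} -> V) :
  (\sum_S F S = \sum_(X : {set 'I_n}) (F (cons_set false X) + F (cons_set true X)))%R.
Proof.
pose uncons (S : {set 'I_n.+1}) := (ord0 \in S, [set i : 'I_n | lift ord0 i \in S]).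
rewrite (reindex (fun p : bool * {set 'I_n} => cons_set p.1 p.2)) /=; last first.
  exists uncons => [[b X] _|S _] /=.
    rewrite /uncons mem_cons_set0; congr pair.
    by apply/setP => i; rewrite inE mem_cons_set_lift.
  by apply/setP => x; rewrite inE; case: unliftP => [j ->|->]; rewrite ?inE.
rewrite -(pair_big xpredT xpredT (fun b X => F (cons_set b X))) /= big_bool /=.
by rewrite -big_split /=; apply: eq_bigr => X _; rewrite addrC.
Qed.

Definition omits0 n (S : {set 'I_n}) : bool := [forall i in S, val i != 0].

Lemma omits0_cons_set n b (X : {set 'I_n}) : omits0 (cons_set b X) = ~~ b.
Proof.
apply/forall_inP/idP => [omit0 | nb x].
  by apply/negP => b_true; have := omit0 ord0; rewrite mem_cons_set0 => /(_ b_true).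
by case: (unliftP ord0 x) => [i ->|->]; rewrite ?mem_cons_set0 ?lift0 // (negbTE nb).
Qed.

Lemma independent_cons_set n b (X : {set 'I_n}) :
  independent (cons_set b X) = independent X && (b ==> omits0 X).
Proof.
apply/independentP/andP => [indS | [/independentP indX /implyP omit0] x y].
  split; first by apply/independentP => x y xX yX; rewrite -path_adj_lift indS
    ?mem_cons_set_lift.
  apply/implyP => b_true; apply/forall_inP => x xX.
  by rewrite -path_adj0_lift indS ?mem_cons_set0 ?mem_cons_set_lift.
case: (unliftP ord0 x) => [i ->|->]; case: (unliftP ord0 y) => [j ->|->];
  rewrite ?mem_cons_set_lift ?mem_cons_set0 ?path_adj_lift ?path_adj00 //.
- exact: indX.
- by move=> iX b_true; rewrite path_adjC path_adj0_lift (forall_inP (omit0 b_true)).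
- by move=> b_true jX; rewrite path_adj0_lift (forall_inP (omit0 b_true)).
Qed.

Lemma set_I0 (S : {set 'I_0}) : S = set0.
Proof. by apply/setP => -[]. Qed.

Local Open Scope ring_scope.

Section WeightedIndependentSets.

Variable V : nmodType.
Implicit Types (w : nat -> V) (n : nat).

Definition indep_sum n w := \sum_(S : {set 'I_n} | independent S) w #|S|.

Definition indep_sum_omit0 n w :=
  \sum_(S : {set 'I_n} | independent S && omits0 S) w #|S|.

Lemma indep_sum0 w : indep_sum 0 w = w 0%N.
Proof.
rewrite /indep_sum (big_pred1 set0) ?cards0 // => S /=.
by rewrite (set_I0 S) eqxx; apply/forall_inP => x; rewrite inE.
Qed.

Lemma indep_sum_omit00 w : indep_sum_omit0 0 w = w 0%N.
Proof.
rewrite /indep_sum_omit0 (big_pred1 set0) ?cards0 // => S /=.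
by rewrite (set_I0 S) eqxx; apply/andP; split; apply/forall_inP => x; rewrite inE.
Qed.

Lemma indep_sumS n w :
  indep_sum n.+1 w = indep_sum n w + indep_sum_omit0 n (w \o succn).
Proof.
rewrite /indep_sum /indep_sum_omit0 big_mkcond big_cons_set big_split /=.
by congr (_ + _); rewrite [RHS]big_mkcond; apply: eq_bigr => X _;
  rewrite independent_cons_set card_cons_set /= ?andbT.
Qed.

Lemma indep_sum_omit0S n w : indep_sum_omit0 n.+1 w = indep_sum n w.
Proof.
rewrite /indep_sum_omit0 /indep_sum big_mkcond big_cons_set [RHS]big_mkcond.
apply: eq_bigr => X _.
by rewrite !omits0_cons_set !independent_cons_set card_cons_set /= andbF addr0 !andbT.
Qed.

Lemma indep_sum1 w : indep_sum 1 w = w 0%N + w 1%N.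
Proof. by rewrite indep_sumS indep_sum0 indep_sum_omit00. Qed.

Lemma indep_sumSS n w :
  indep_sum n.+2 w = indep_sum n.+1 w + indep_sum n (w \o succn).
Proof. by rewrite indep_sumS indep_sum_omit0S. Qed.

End WeightedIndependentSets.

Lemma sum_card_partition (V : nmodType) (T : finType) (P : pred {set T})
    (w : nat -> V) N :
  (forall S, P S -> #|S| < N)%N ->
  \sum_(S | P S) w #|S| = \sum_(j < N) w j *+ #|[set S | P S & #|S| == j]|.
Proof.
move=> card_lt.
transitivity (\sum_(S | P S) \sum_(j < N | #|S| == j) w #|S|).
  by apply: eq_bigr => S PS; rewrite (big_pred1 (Ordinal (card_lt S PS))).
rewrite (exchange_big_dep xpredT) //=; apply: eq_bigr => j _.
rewrite -sumr_const; apply: eq_big => [S | S /andP[_ /eqP ->] //].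
by rewrite inE.
Qed.

Definition alt_weight (j : nat) : int := (-1) ^+ j.-1 * j%:Z.

Definition sign_weight (j : nat) : int := (-1) ^+ j.

Lemma T_indep_sum n : T n = indep_sum n alt_weight.
Proof.
rewrite /indep_sum (@sum_card_partition _ _ _ _ (uphalf n).+1); last first.
  by move=> S /card_independent.
rewrite /T big_add1 /= big_mkord [RHS]big_ord_recl /alt_weight mulr0 mul0rn add0r.
by apply: eq_bigr => j _; rewrite -[X in _ * X]natz mulr_natr.
Qed.

(* [alt_weight j.+1 = sign_weight j - alt_weight j] and [sign_weight j.+1 = - sign_weight j]. *)
Lemma alt_indep_sumSS n :
  indep_sum n.+2 alt_weight =
  indep_sum n.+1 alt_weight - indep_sum n alt_weight + indep_sum n sign_weight.
Proof.
rewrite indep_sumSS -addrA; congr (_ + _).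
rewrite /indep_sum -sumrN -big_split; apply: eq_bigr => S _ /=.
by rewrite /alt_weight /sign_weight; case: #|S| => [|j] /=; rewrite ?exprS ?expr0; ring.
Qed.

Lemma sign_indep_sumSS n :
  indep_sum n.+2 sign_weight = indep_sum n.+1 sign_weight - indep_sum n sign_weight.
Proof.
rewrite indep_sumSS; congr (_ + _).
by rewrite /indep_sum -sumrN; apply: eq_bigr => S _; rewrite /sign_weight /= exprS mulN1r.
Qed.

Section PeriodSixRecurrence.

Variables t a : nat -> int.
Hypotheses (a0 : a 0%N = 1) (a1 : a 1%N = 0)
  (aSS : forall n, a n.+2 = a n.+1 - a n).
Hypotheses (t0 : t 0%N = 0) (t1 : t 1%N = 1)
  (tSS : forall n, t n.+2 = t n.+1 - t n + a n).

Lemma recurrence_mod3 k : let s := (-1) ^+ k : int in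
  [/\ t (3 * k)%N = - s * k%:Z, t (3 * k).+1 = s * k.+1%:Z,
      a (3 * k)%N = s & a (3 * k).+1 = 0].
Proof.
elim: k => [|k [t3k t3k1 a3k a3k1]] /=; first by rewrite muln0 t0 t1 a0 a1; split; ring.
have a3k2 : a (3 * k).+2 = - (-1) ^+ k by rewrite aSS a3k1 a3k sub0r.
have a3k3 : a (3 * k).+3 = - (-1) ^+ k by rewrite aSS a3k2 a3k1 subr0.
have a3k4 : a (3 * k).+4 = 0 by rewrite aSS a3k3 a3k2 subrr.
have t3k2 : t (3 * k).+2 = (-1) ^+ k * (2 * k.+1)%:Z by rewrite tSS t3k1 t3k a3k; ring.
have t3k3 : t (3 * k).+3 = (-1) ^+ k * k.+1%:Z by rewrite tSS t3k2 t3k1 a3k1; ring.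
have t3k4 : t (3 * k).+4 = - (-1) ^+ k * k.+2%:Z by rewrite tSS t3k3 t3k2 a3k2; ring.
by rewrite mulnS add3n exprS mulN1r a3k3 a3k4 t3k3 t3k4; split => //; ring.
Qed.

Lemma recurrence_closed_form k : let s := (-1) ^+ k : int in
  [/\ t (3 * k).+1 = s * k.+1%:Z, t (3 * k).+2 = s * (2 * k.+1)%:Z
     & t (3 * k).+3 = s * k.+1%:Z].
Proof.
have [t3k t3k1 a3k a3k1] := recurrence_mod3 k.
have t3k2 : t (3 * k).+2 = (-1) ^+ k * (2 * k.+1)%:Z by rewrite tSS t3k1 t3k a3k; ring.
by split => //; rewrite tSS t3k2 t3k1 a3k1; ring.
Qed.

End PeriodSixRecurrence.

Local Close Scope ring_scope.

Theorem lemma4p4 (k : nat) :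
  [/\ T (3 * k + 1) = ((-1) ^+ k * (k.+1)%:Z)%R,
      T (3 * k + 3) = ((-1) ^+ k * (k.+1)%:Z)%R
    & T (3 * k + 2) = ((-1) ^+ k * (2 * (k.+1))%:Z)%R].
Proof.
rewrite !T_indep_sum addn1 addn2 addn3.
by case: (@recurrence_closed_form (fun n => indep_sum n alt_weight)
  (fun n => indep_sum n sign_weight) (indep_sum0 _) (indep_sum1 _) sign_indep_sumSS
  (indep_sum0 _) (indep_sum1 _) alt_indep_sumSS k) => -> -> ->.
Qed.
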